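(* Let $\{A_n\}_{n\geq1}$ be an increasing sequence of finite sets of isolated points of $\mathbb{R}^2$ with $f(n)=\sharp A_n\to+\infty$, $S=\bigcup_n A_n$, and $\{Z(x):x\in S\}$ a random field whose variables all have distribution function $F$. Let $\tau>0$ and $\{u_n(\tau)\}$ be reals with $E\big(\sum_{x\in A_n}\mathbf{1}_{\{Z(x)>u_n(\tau)\}}\big)\to\tau$. For each $n$ let $\mathcal{B}_n=\{B_n^{(s,t)}:s,t=1,\dots,k_n\}$ be a family of $k_n^2$ pairwise disjoint subsets of $A_n$ with $\sharp B_n^{(s,t)}\sim f(n)/k_n^2$ and $P(\bigvee_{x\in A_n}Z(x)\le u_n(\tau))-\prod_{s,t}P(\bigvee_{x\in B_n^{(s,t)}}Z(x)\le u_n(\tau))\to0$. Suppose $\mathbf{Z}_A=\{Z(x):x\in A_n\}_{n\ge1}$ satisfies conditions $D'(u_n(\tau),\mathcal{B}_n)$ and $D(u_n(\tau),k_n,l_n)$. Then $$P\Big(\bigvee_{x\in A_n}Z(x)\le u_n(\tau)\Big)\longrightarrow e^{-\tau}\quad(n\to\infty).$$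
   Context: $\bigvee$ is maximum; $\pi_1,\pi_2$ coordinate projections; $f_i(n)=\sharp\pi_i(A_n)$. Condition $D'(u_n,\mathcal B_n)$: $\sum_{B\in\mathcal B_n}\sum_{x,y\in B,\,x\neq y}P(Z(x)>u_n,Z(y)>u_n)\to0$ as $n\to\infty$. The pair $(I,J)$ is in $\mathcal{S}(\pi_i(A_n),l_n)$ if $I,J$ are sets of consecutive values of $\pi_i(A_n)$ separated by at least $l_n$ values of $\pi_i(A_n)$. Condition $D(u_n,k_n,l_n)$: there are positive integer sequences $l_n\to\infty$, $k_n\to\infty$ with $k_nl_nf_i(n)/f(n)\to0$ ($i=1,2$) and $k_n^2\alpha(l_n,u_n)\to0$, where $\alpha(l_n,u_n)=\sup|P(\bigvee_{x\in C\cup D}Z(x)\le u_n)-P(\bigvee_{x\in C}Z(x)\le u_n)P(\bigvee_{x\in D}Z(x)\le u_n)|$ over subsets $C,D\subseteq A_n$ whose $\pi_i$-projections form a pair in $\mathcal{S}(\pi_i(A_n),l_n)$ for each $i$. *)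

From HB Require Import structures.
From mathcomp Require Import all_boot all_order all_algebra.
From mathcomp Require Import finmap.
From mathcomp Require Import all_classical all_reals all_analysis.

Set Implicit Arguments.
Unset Strict Implicit.
Unset Printing Implicit Defensive.

Import Order.TTheory GRing.Theory Num.Theory numFieldNormedType.Exports.
Local Open Scope ring_scope.
Local Open Scope classical_set_scope.
Local Open Scope fset_scope.

Definition tends_infty (v : nat -> nat) : Prop :=
  forall M : nat, exists N : nat, forall n : nat, (N <= n)%N -> (M <= v n)%N.

Definition pr d (T : measurableType d) (R : realType) (P : probability T R)
  (E : set T) : R := fine (P E).

Definition max_le d (T : measurableType d) (R : realType)
  (Z : R * R -> T -> R) (C : {fset (R * R)}) (u : R) : set T :=
  [set w | forall x, x \in C -> Z x w <= u].

Definition exceed d (T : measurableType d) (R : realType)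
  (Z : R * R -> T -> R) (u : R) (x : R * R) : set T :=
  [set w | u < Z x w].

Definition count_exceed d (T : measurableType d) (R : realType)
  (Z : R * R -> T -> R) (C : {fset (R * R)}) (u : R) (w : T) : R :=
  \sum_(x <- C) ((u < Z x w)%R : bool)%:R.

Definition proj1s (R : realType) (C : {fset (R * R)}) : {fset R} :=
  [fset x.1 | x in C].
Definition proj2s (R : realType) (C : {fset (R * R)}) : {fset R} :=
  [fset x.2 | x in C].

Definition consecutive (R : realType) (X I : {fset R}) : Prop :=
  I `<=` X /\
  forall a b c, a \in I -> b \in I -> c \in X -> a <= c <= b -> c \in I.

Definition separated_by (R : realType) (X : {fset R}) (l : nat)
  (I J : {fset R}) : Prop :=
  forall a b, a \in I -> b \in J ->
    a < b /\ (l <= #|` [fset c in X | (a < c < b)%R]|)%N.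

Definition sep_pair (R : realType) (X : {fset R}) (l : nat)
  (I J : {fset R}) : Prop :=
  consecutive X I /\ consecutive X J /\
  (separated_by X l I J \/ separated_by X l J I).

Definition alpha d (T : measurableType d) (R : realType) (P : probability T R)
  (Z : R * R -> T -> R) (A : {fset (R * R)}) (l : nat) (u : R) : R :=
  sup [set r : R | exists C D : {fset (R * R)},
        [/\ C `<=` A, D `<=` A,
            sep_pair (proj1s A) l (proj1s C) (proj1s D),
            sep_pair (proj2s A) l (proj2s C) (proj2s D) &
            r = `| pr P (max_le Z (C `|` D) u)
                   - pr P (max_le Z C u) * pr P (max_le Z D u) | ] ].

Definition condD' d (T : measurableType d) (R : realType) (P : probability T R)
  (Z : R * R -> T -> R) (u : nat -> R) (k : nat -> nat)
  (B : nat -> nat -> nat -> {fset (R * R)}) : Prop :=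
  (fun n => \sum_(s < k n) \sum_(t < k n) \sum_(x <- B n s t)
      \sum_(y <- B n s t | x != y)
        pr P (exceed Z (u n) x `&` exceed Z (u n) y)) @ \oo --> (0 : R).

(* Condition D(u_n, k_n, l_n) (the l_n being existentially quantified) *)
Definition condD d (T : measurableType d) (R : realType) (P : probability T R)
  (Z : R * R -> T -> R) (A : nat -> {fset (R * R)}) (u : nat -> R)
  (k : nat -> nat) : Prop :=
  exists l : nat -> nat,
    [/\ (forall n, 0 < l n)%N, (forall n, 0 < k n)%N,
        tends_infty l, tends_infty k &
      [/\
        (fun n => (k n * l n * #|` proj1s (A n)|)%:R / (#|` A n|)%:R)
           @ \oo --> (0 : R),
        (fun n => (k n * l n * #|` proj2s (A n)|)%:R / (#|` A n|)%:R)
           @ \oo --> (0 : R) &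
        (fun n => ((k n) ^ 2)%:R * alpha P Z (A n) (l n) (u n))
           @ \oo --> (0 : R)]].

From HB Require Import structures.
From mathcomp Require Import all_boot all_order all_algebra.
From mathcomp Require Import finmap.
From mathcomp Require Import all_classical all_reals all_analysis.
From mathcomp Require Import lra ring.

(* Let q_n = P(Z(x) > u_n) be the common exceedance probability and
   a = #B q_n the exceedance mass of a block B.  Bonferroni's inequalities give
   1 - a <= P(max_B Z <= u_n) <= 1 - a + b, where b sums P(Z(x) > u_n, Z(y) > u_n)
   over distinct pairs of B.  As the blocks have size ~ f(n)/k_n^2, every a is at
   most 2 f(n) q_n / k_n^2 -> 0, so 1 - a >= exp(- a - 2 a^2) and the product over
   the k_n^2 blocks lies between exp(- sum a - 2 sum a^2) and exp(- sum a + sum b).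
   Now sum a -> tau because f(n) q_n is the mean number of exceedances,
   sum a^2 <= (max a) sum a -> 0, and sum b -> 0 is condition D'.  The block-product
   approximation transfers the limit exp(- tau) to the maximum over A_n. *)

Import Order.TTheory GRing.Theory Num.Theory numFieldNormedType.Exports.
Local Open Scope ring_scope.
Local Open Scope classical_set_scope.

Section real_probability.
Context d (T : measurableType d) (R : realType) (P : probability T R).

Lemma prE (A : set T) : measurable A -> P A = (pr P A)%:E.
Proof. by move=> mA; rewrite /pr fineK //; exact: fin_num_measure. Qed.

Lemma pr_ge0 (A : set T) : 0 <= pr P A.
Proof. by rewrite /pr fine_ge0. Qed.

Lemma pr_le (A B : set T) : measurable A -> measurable B -> A `<=` B ->
  pr P A <= pr P B.
Proof.
by move=> mA mB AB; rewrite -lee_fin -!prE //; apply: le_measure; rewrite ?inE.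
Qed.

Lemma prT : pr P setT = 1.
Proof. by rewrite /pr probability_setT. Qed.

Lemma prD (A B : set T) : measurable A -> measurable B ->
  pr P (A `\` B) = pr P A - pr P (A `&` B).
Proof.
move=> mA mB; apply: EFin_inj; rewrite EFinB -!prE //; last exact: measurableD.
  by rewrite measureD // (le_lt_trans (probability_le1 _ mA)) // ltey.
exact: measurableI.
Qed.

Lemma prC (A : set T) : measurable A -> pr P (~` A) = 1 - pr P A.
Proof.
move=> mA; apply: EFin_inj; rewrite EFinB -!prE //; last exact: measurableC.
by rewrite probability_setC.
Qed.

End real_probability.

Section bonferroni.
Context {d : measure_display} {T : measurableType d} {R : realType}.
Context (P : probability T R) {Z : R * R -> T -> R} (u : R).
Hypothesis mZ : forall x, measurable_fun setT (Z x).

(* [max_le Z C u] for a finite set [C] is [max_le_seq C]; the list form allows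
   induction. *)
Definition max_le_seq (s : seq (R * R)) : set T :=
  [set w | forall x, x \in s -> Z x w <= u].

Lemma max_le_fsetE (C : {fset (R * R)}) : max_le Z C u = max_le_seq C.
Proof. by []. Qed.

Lemma measurable_exceed x : measurable (exceed Z u x).
Proof.
have := mZ x measurableT _ (measurable_itv `]u, +oo[%R).
rewrite setTI; congr measurable; apply/seteqP; split => w /=;
  by rewrite in_itv /= andbT.
Qed.

Lemma max_le_seq_nil : max_le_seq [::] = setT.
Proof. by apply/seteqP; split => // w _ x; rewrite in_nil. Qed.

Lemma max_le_seq_cons x s :
  max_le_seq (x :: s) = max_le_seq s `\` exceed Z u x.
Proof.
apply/seteqP; split => w /=.
  move=> Zw; split; first by move=> y ys; apply: Zw; rewrite inE ys orbT.
  by rewrite /exceed /= ltNge Zw // mem_head.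
move=> [Zw Zxw] y; rewrite inE => /orP [/eqP ->|]; last exact: Zw.
by rewrite leNgt; apply/negP.
Qed.

Lemma measurable_max_le_seq s : measurable (max_le_seq s).
Proof.
elim: s => [|x s IH]; first by rewrite max_le_seq_nil.
by rewrite max_le_seq_cons; exact: measurableD (measurable_exceed x).
Qed.

Lemma bonferroni_lowerI (G : set T) s : measurable G ->
  pr P G - \sum_(y <- s) pr P (G `&` exceed Z u y) <= pr P (G `&` max_le_seq s).
Proof.
move=> mG; elim: s => [|y s IH].
  by rewrite big_nil subr0 max_le_seq_nil setIT.
have mGs := measurableI _ _ mG (measurable_max_le_seq s).
rewrite max_le_seq_cons setIDA prD // ?big_cons; last exact: measurable_exceed.
suff : pr P (G `&` max_le_seq s `&` exceed Z u y) <= pr P (G `&` exceed Z u y).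
  by lra.
apply: pr_le; [exact: measurableI (measurable_exceed y)..|].
by move=> w [[]].
Qed.

Lemma bonferroni_lower s :
  1 - \sum_(y <- s) pr P (exceed Z u y) <= pr P (max_le_seq s).
Proof.
have := @bonferroni_lowerI setT s measurableT; rewrite prT setTI.
by under eq_bigr do rewrite setTI.
Qed.

Lemma bonferroni_upper s : uniq s ->
  pr P (max_le_seq s) <= 1 - \sum_(y <- s) pr P (exceed Z u y) +
    \sum_(x <- s) \sum_(y <- s | x != y) pr P (exceed Z u x `&` exceed Z u y).
Proof.
elim: s => [|x s IH].
  by rewrite !big_nil max_le_seq_nil prT subr0 addr0.
rewrite /= => /andP [xs us].
rewrite max_le_seq_cons prD; [|exact: measurable_max_le_seq|exact: measurable_exceed].
rewrite setIC.
have low := @bonferroni_lowerI _ s (measurable_exceed x).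
have up := IH us.
rewrite big_cons big_cons.
have -> : \sum_(y <- x :: s | x != y) pr P (exceed Z u x `&` exceed Z u y) =
          \sum_(y <- s) pr P (exceed Z u x `&` exceed Z u y).
  rewrite big_cons eqxx /= big_seq_cond [RHS]big_seq_cond; apply: eq_bigl => y.
  by case ys: (y \in s); rewrite ?andbT //=; apply: contraNneq xs => ->.
suff : \sum_(i <- s) \sum_(y <- s | i != y) pr P (exceed Z u i `&` exceed Z u y)
    <= \sum_(i <- s) \sum_(y <- x :: s | i != y)
         pr P (exceed Z u i `&` exceed Z u y) by lra.
apply: ler_sum => i _; rewrite big_cons; case: ifP => _ //.
by rewrite lerDr pr_ge0.
Qed.

Lemma pr_exceed x : pr P (exceed Z u x) = 1 - pr P [set w | Z x w <= u].
Proof.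
rewrite -[exceed _ _ _]setCK prC; last exact/measurableC/measurable_exceed.
congr (1 - pr P _); apply/seteqP; split => w /=; rewrite /exceed /=.
  by move=> /negP; rewrite -leNgt.
by rewrite leNgt => /negP.
Qed.

Lemma expectation_count_exceed (C : {fset (R * R)}) :
  ('E_P[count_exceed Z C u] = (\sum_(x <- C) pr P (exceed Z u x))%:E)%E.
Proof.
rewrite unlock /count_exceed.
transitivity (\int[P]_w (\sum_(x <- C) (\1_(exceed Z u x) w)%:E))%E.
  apply: eq_integral => w _; rewrite sumEFin; congr EFin; apply: eq_bigr => x _.
  by rewrite indicE; case: (boolP (u < Z x w)) => h;
    [rewrite mem_set|rewrite memNset //=; apply/negP].
rewrite ge0_integral_sum //.
- rewrite -sumEFin; apply: eq_bigr => x _.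
  by rewrite integral_indic ?setIT -?prE //; exact: measurable_exceed.
- move=> x; apply/measurable_realfun.measurable_EFinP.
  exact/measurable_realfun.measurable_indic/measurable_exceed.
Qed.

End bonferroni.

Lemma expR_Nsqr_le_onem (R : realType) (a : R) :
  0 <= a <= 1/2 -> expR (- a - 2 * a ^+ 2) <= 1 - a.
Proof.
move=> /andP [a0 a1].
have e_ge := expR_ge1Dx (a + 2 * a ^+ 2).
have e_gt0 : 0 < expR (a + 2 * a ^+ 2) := expR_gt0 _.
rewrite -opprD expRN -[_^-1]mul1r ler_pdivrMr //.
have : 1 <= (1 - a) * (1 + (a + 2 * a ^+ 2)) by nra.
have : (1 - a) * (1 + (a + 2 * a ^+ 2)) <= (1 - a) * expR (a + 2 * a ^+ 2).
  by apply: ler_wpM2l => //; lra.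
lra.
Qed.

Section block_product.
Variables (R : realType) (K : nat) (a b p : nat -> nat -> R).

Lemma sum2_sqr_le (m : R) : (forall s t : 'I_K, 0 <= a s t <= m) ->
  \sum_(s < K) \sum_(t < K) a s t ^+ 2 <= m * \sum_(s < K) \sum_(t < K) a s t.
Proof.
move=> am; rewrite mulr_sumr; apply: ler_sum => s _; rewrite mulr_sumr.
apply: ler_sum => t _; have /andP [a0 a_le] := am s t.
by rewrite expr2 ler_wpM2r.
Qed.

Lemma expR_le_prod2 (m : R) : m <= 1/2 ->
  (forall s t : 'I_K, 0 <= a s t <= m /\ 1 - a s t <= p s t) ->
  expR (- (\sum_(s < K) \sum_(t < K) a s t)
        - 2 * \sum_(s < K) \sum_(t < K) a s t ^+ 2)
    <= \prod_(s < K) \prod_(t < K) p s t.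
Proof.
move=> m_le ap; rewrite -sumrN mulr_sumr -sumrB expR_sum.
apply: ler_prod => s _; rewrite expR_ge0 -sumrN mulr_sumr -sumrB expR_sum.
apply: ler_prod => t _; have [/andP [a0 a_le] pa] := ap s t.
rewrite expR_ge0; apply: le_trans pa; apply: expR_Nsqr_le_onem.
by rewrite a0 (le_trans a_le).
Qed.

Lemma prod2_le_expR : (forall s t : 'I_K, 0 <= p s t <= 1 - a s t + b s t) ->
  \prod_(s < K) \prod_(t < K) p s t
    <= expR (- (\sum_(s < K) \sum_(t < K) a s t)
             + \sum_(s < K) \sum_(t < K) b s t).
Proof.
move=> pab; rewrite -sumrN -big_split expR_sum; apply: ler_prod => s _.
rewrite prodr_ge0 => [|t _]; last by have /andP [] := pab s t.
rewrite -sumrN -big_split expR_sum; apply: ler_prod => t _.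
have /andP [p0 p_le] := pab s t; rewrite p0 (le_trans p_le) //.
by rewrite -addrA expR_ge1Dx.
Qed.

End block_product.

Lemma cvg_prod2_expR {R : realType} {k : nat -> nat}
    {a b p : nat -> nat -> nat -> R} {m : nat -> R} {tau : R} :
  (forall n (s t : 'I_(k n)),
     0 <= p n s t /\ 1 - a n s t <= p n s t <= 1 - a n s t + b n s t) ->
  (\forall n \near \oo, forall s t : 'I_(k n), 0 <= a n s t <= m n) ->
  m @ \oo --> 0 ->
  (fun n => \sum_(s < k n) \sum_(t < k n) a n s t) @ \oo --> tau ->
  (fun n => \sum_(s < k n) \sum_(t < k n) b n s t) @ \oo --> 0 ->
  (fun n => \prod_(s < k n) \prod_(t < k n) p n s t) @ \oo --> expR (- tau).
Proof.
move=> pab am m0 a_tau b0.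
have ma_cvg0 : (fun n => m n * \sum_(s < k n) \sum_(t < k n) a n s t) @ \oo --> 0.
  by rewrite -[X in _ --> X](mul0r tau); exact: cvgM.
have Ha2 : (fun n => \sum_(s < k n) \sum_(t < k n) a n s t ^+ 2) @ \oo --> 0.
  apply: (squeeze_cvgr _ (cvg_cst 0) ma_cvg0); near=> n; apply/andP; split.
    by apply: sumr_ge0 => s _; apply: sumr_ge0 => t _; exact: sqr_ge0.
  by apply: sum2_sqr_le; near: n.
have low : (fun n => expR (- (\sum_(s < k n) \sum_(t < k n) a n s t)
      - 2 * \sum_(s < k n) \sum_(t < k n) a n s t ^+ 2)) @ \oo --> expR (- tau).
  apply: continuous_cvg; first exact: continuous_expR.
  rewrite -[X in _ --> X](subr0 (- tau)) -[X in _ --> _ - X](mulr0 2).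
  by apply: cvgB; [exact: cvgN|exact: cvgMl_tmp].
have up : (fun n => expR (- (\sum_(s < k n) \sum_(t < k n) a n s t)
      + \sum_(s < k n) \sum_(t < k n) b n s t)) @ \oo --> expR (- tau).
  apply: continuous_cvg; first exact: continuous_expR.
  by rewrite -[X in _ --> X]addr0; apply: cvgD; [exact: cvgN|].
apply: (squeeze_cvgr _ low up).
near=> n.
have amn : forall s t : 'I_(k n), 0 <= a n s t <= m n by near: n.
have m_le : m n <= 1/2.
  apply: le_trans (ler_norm _) _; near: n; apply: (cvgr0_norm_le _ m0); lra.
apply/andP; split.
  apply: (@expR_le_prod2 R (k n) (a n) (p n) (m n) m_le) => s t.
  by have [_ /andP [pa _]] := pab n s t; split.
apply: prod2_le_expR => s t.
by have [p0 /andP [_ pb]] := pab n s t; rewrite p0.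
Unshelve. all: by end_near.
Qed.

Lemma tends_infty_near {v : nat -> nat} :
  tends_infty v -> forall M, \forall n \near \oo, (M <= v n)%N.
Proof. by move=> v_infty M; have [N vN] := v_infty M; exists N. Qed.

Lemma tends_infty_invr_cvg0 (R : realType) (v : nat -> nat) :
  tends_infty v -> (fun n => ((v n)%:R : R)^-1) @ \oo --> 0.
Proof.
move=> v_infty; apply/cvgrPdist_lt => e e0.
have [N0 _ N0e] := near_infty_natSinv_lt (PosNum e0).
near=> n; rewrite sub0r normrN.
have : (N0.+1 <= v n)%N by near: n; exact: tends_infty_near.
case: (v n) => // j j_ge; rewrite ger0_norm //; exact: N0e.
Unshelve. all: by end_near.
Qed.

Section block_cardinals.
Context {R : realType} {k f : nat -> nat} {c : nat -> nat -> nat -> nat}.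
Hypothesis k_gt0 : forall n, (0 < k n)%N.
Hypothesis f_gt0 : \forall n \near \oo, (0 < f n)%N.
Hypothesis c_ratio : forall e : R, 0 < e -> exists N : nat, forall n s t,
  (N <= n)%N -> (s < k n)%N -> (t < k n)%N ->
  `| (c n s t * (k n) ^ 2)%:R / (f n)%:R - 1 | < e.

Lemma cvg_sum_block_cardinals :
  (fun n => (\sum_(s < k n) \sum_(t < k n) (c n s t)%:R) / ((f n)%:R : R))
    @ \oo --> (1 : R).
Proof.
apply/cvgrPdist_lt => e e0.
have [N cN] := @c_ratio (e / 2) (divr_gt0 e0 (ltr0Sn R 1)).
near=> n.
have f0 : (0 < (f n)%:R :> R) by rewrite ltr0n; near: n.
pose w : R := ((k n) ^ 2)%:R^-1.
have k2_gt0 : (0 < ((k n) ^ 2)%:R :> R) by rewrite ltr0n expn_gt0 k_gt0.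
have sum_w : \sum_(s < k n) \sum_(t < k n) w = 1.
  rewrite sumr_const card_ord sumr_const card_ord -mulrnA -mulr_natr.
  by rewrite -[(k n * k n)%N]/(k n ^ 2)%N mulVf // gt_eqF.
have -> : (\sum_(s < k n) \sum_(t < k n) (c n s t)%:R) / (f n)%:R =
    1 + \sum_(s < k n) \sum_(t < k n) w * ((c n s t * k n ^ 2)%:R / (f n)%:R - 1).
  rewrite -[X in X + _]sum_w mulr_suml -big_split; apply: eq_bigr => s _.
  rewrite mulr_suml -big_split; apply: eq_bigr => t _.
  by rewrite /= natrM /w; field; rewrite gt_eqF // pnatr_eq0 -lt0n k_gt0.
rewrite opprD addNKr normrN.
apply: (le_lt_trans (ler_norm_sum _ _ _)).
apply: (@le_lt_trans _ _ (\sum_(s < k n) \sum_(t < k n) w * (e / 2))).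
  apply: ler_sum => s _; apply: (le_trans (ler_norm_sum _ _ _)).
  apply: ler_sum => t _; rewrite normrM ger0_norm ?invr_ge0 ?ltW //.
  rewrite ltr_pM2l ?invr_gt0 //; apply: cN => //; near: n; by exists N.
by rewrite -!mulr_suml sum_w mul1r; lra.
Unshelve. all: by end_near.
Qed.

Lemma block_cardinal_le : \forall n \near \oo, forall s t : 'I_(k n),
  ((c n s t)%:R : R) <= 2 * (f n)%:R / ((k n) ^ 2)%:R.
Proof.
have [N cN] := @c_ratio 1 ltr01.
near=> n => s t.
have f0 : (0 < (f n)%:R :> R) by rewrite ltr0n; near: n.
have k2_gt0 : (0 < ((k n) ^ 2)%:R :> R) by rewrite ltr0n expn_gt0 k_gt0.
rewrite ler_pdivlMr //.
have : `|(c n s t * k n ^ 2)%:R / (f n)%:R - 1| < 1 :> R.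
  by apply: cN => //; near: n; exists N.
rewrite ltr_norml natrM => /andP [_].
by rewrite ltrBlDr ltr_pdivrMr // => /ltW.
Unshelve. all: by end_near.
Qed.

Lemma cvg_sum_block_mass {q : nat -> R} {tau : R} :
  (fun n => (f n)%:R * q n) @ \oo --> tau ->
  (fun n => \sum_(s < k n) \sum_(t < k n) (c n s t)%:R * q n) @ \oo --> tau.
Proof.
move=> fq_tau; rewrite -[tau]mul1r.
apply: cvg_trans (cvgM cvg_sum_block_cardinals fq_tau).
apply: near_eq_cvg; near=> n.
have f0 : (f n)%:R != 0 :> R by rewrite pnatr_eq0 -lt0n; near: n.
rewrite /= mulrA divfK // mulr_suml; apply: eq_bigr => s _.
by rewrite mulr_suml.
Unshelve. all: by end_near.
Qed.

Lemma block_mass_le {q : nat -> R} : (\forall n \near \oo, 0 <= q n) ->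
  \forall n \near \oo, forall s t : 'I_(k n),
    0 <= (c n s t)%:R * q n <= 2 * ((f n)%:R * q n) / ((k n) ^ 2)%:R.
Proof.
move=> q_ge0; near=> n.
have q0 : 0 <= q n by near: n.
have c_le : forall s t : 'I_(k n),
    (c n s t)%:R <= 2 * (f n)%:R / ((k n) ^ 2)%:R :> R.
  by near: n; exact: block_cardinal_le.
by move=> s t; rewrite mulr_ge0 //= mulrA mulrAC ler_wpM2r.
Unshelve. all: by end_near.
Qed.

Lemma cvg_block_mass_bound {q : nat -> R} {tau : R} : tends_infty k ->
  (fun n => (f n)%:R * q n) @ \oo --> tau ->
  (fun n => 2 * ((f n)%:R * q n) / ((k n) ^ 2)%:R) @ \oo --> 0.
Proof.
move=> k_infty fq_tau; rewrite -(mulr0 (2 * tau)).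
apply: cvgM; first exact: cvgMl_tmp.
apply: tends_infty_invr_cvg0 => M; have [N kN] := k_infty M.
by exists N => n /kN /leq_trans; apply; rewrite leq_pmulr.
Qed.

End block_cardinals.

Lemma sumr_const_fset (K : choiceType) (V : pzSemiRingType) (C : {fset K})
  (c : V) : \sum_(x <- C) c = #|` C|%:R * c.
Proof.
by rewrite card_fset_sum1 natr_sum mulr_suml; apply: eq_bigr => _ _; rewrite mul1r.
Qed.

Section common_marginal.
Context {d : measure_display} {T : measurableType d} {R : realType}.
Context {P : probability T R} {Z : R * R -> T -> R}.
Hypothesis mZ : forall x, measurable_fun setT (Z x).
Context {A : nat -> {fset (R * R)}} {u : nat -> R} {F : R -> R}.
Hypothesis ZF : forall x, (exists n, x \in A n) ->
  forall t, pr P [set w | Z x w <= t] = F t.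

Lemma pr_exceed_common n x : x \in A n -> pr P (exceed Z (u n) x) = 1 - F (u n).
Proof. by move=> xA; rewrite pr_exceed // ZF //; exists n. Qed.

Lemma sum_pr_exceed_common n (C : {fset (R * R)}) : (C `<=` A n)%fset ->
  \sum_(x <- C) pr P (exceed Z (u n) x) = #|` C|%:R * (1 - F (u n)).
Proof.
move=> /fsubsetP CA; rewrite -sumr_const_fset.
by apply: eq_big_seq => x /CA; exact: pr_exceed_common.
Qed.

Lemma common_exceed_ge0 : tends_infty (fun n => #|` A n|) ->
  \forall n \near \oo, 0 <= 1 - F (u n).
Proof.
move=> A_infty; apply: filterS (tends_infty_near A_infty 1%N) => n.
rewrite cardfs_gt0 => /fset0Pn [x xA].
by rewrite -(pr_exceed_common n x xA) pr_ge0.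
Qed.

Lemma cvg_mean_exceedances {tau : R} :
  ('E_P[count_exceed Z (A n) (u n)] @[n --> \oo] --> tau%:E)%E ->
  (fun n => #|` A n|%:R * (1 - F (u n))) @ \oo --> tau.
Proof.
have fineE : fine \o (fun n => 'E_P[count_exceed Z (A n) (u n)])%E =1
    (fun n => #|` A n|%:R * (1 - F (u n))).
  by move=> n; rewrite /= expectation_count_exceed // sum_pr_exceed_common.
by rewrite -(eq_cvg _ _ fineE); exact: fine_cvg.
Qed.

End common_marginal.

Local Open Scope fset_scope.

Theorem proposition3p2 (R : realType) (d : measure_display)
  (T : measurableType d) (P : probability T R)
  (A : nat -> {fset (R * R)}) (Z : R * R -> T -> R)
  (tau : R) (u : nat -> R) (k : nat -> nat)
  (B : nat -> nat -> nat -> {fset (R * R)}) :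
  (* increasing sequence of finite sets, f(n) -> +oo *)
  (forall n, A n `<=` A n.+1) ->
  tends_infty (fun n => #|` A n|) ->
  (* points of S = \bigcup_n A_n are isolated in S *)
  (forall x, (exists n, x \in A n) ->
     exists2 e : R, 0 < e & forall y, (exists n, y \in A n) ->
       `|y.1 - x.1| < e -> `|y.2 - x.2| < e -> y = x) ->
  (* random field with common distribution function *)
  (forall x, measurable_fun setT (Z x)) ->
  (exists F : R -> R, forall x, (exists n, x \in A n) ->
     forall t, pr P [set w | Z x w <= t] = F t) ->
  0 < tau ->
  ('E_P[count_exceed Z (A n) (u n)] @[n --> \oo] --> tau%:E)%E ->
  (* the block families B_n *)
  (forall n s t, (s < k n)%N -> (t < k n)%N -> B n s t `<=` A n) ->
  (forall n s t s' t', (s < k n)%N -> (t < k n)%N -> (s' < k n)%N ->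
     (t' < k n)%N -> (s, t) != (s', t') -> B n s t `&` B n s' t' = fset0) ->
  (forall e : R, 0 < e -> exists N : nat, forall n s t, (N <= n)%N ->
     (s < k n)%N -> (t < k n)%N ->
     `| (#|` B n s t| * (k n) ^ 2)%:R / (#|` A n|)%:R - 1 | < e) ->
  (fun n => pr P (max_le Z (A n) (u n))
     - \prod_(s < k n) \prod_(t < k n) pr P (max_le Z (B n s t) (u n)))
     @ \oo --> (0 : R) ->
  condD' P Z u k B ->
  condD P Z A u k ->
  (fun n => pr P (max_le Z (A n) (u n))) @ \oo --> expR (- tau).
Proof.
(* Monotonicity, isolation, disjointness of the blocks and condition D serve
   only to derive the block-product approximation, which is assumed here. *)
move=> _ A_infty _ mZ [F ZF] _ count_tau B_sub _ B_card prod_approx D'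
  [_ [_ k_gt0 _ k_infty _]].
have A_gt0 := tends_infty_near A_infty 1%N.
have fq_tau := cvg_mean_exceedances mZ ZF count_tau.
pose a n s t := (#|` B n s t|%:R * (1 - F (u n)))%R.
pose p n s t := pr P (max_le Z (B n s t) (u n)).
pose b n s t := \sum_(x <- B n s t) \sum_(y <- B n s t | x != y)
  pr P (exceed Z (u n) x `&` exceed Z (u n) y).
have bonf n (s t : 'I_(k n)) :
    (0 <= p n s t /\ 1 - a n s t <= p n s t <= 1 - a n s t + b n s t)%R.
  rewrite /p /a -(sum_pr_exceed_common mZ ZF) ?B_sub // max_le_fsetE.
  rewrite pr_ge0 bonferroni_lower //.
  by split=> //=; exact (bonferroni_upper P (u n) mZ _ (fset_uniq (B n s t))).
have prod_cvg := cvg_prod2_expR bonf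
  (block_mass_le k_gt0 A_gt0 B_card (common_exceed_ge0 mZ ZF A_infty))
  (cvg_block_mass_bound k_gt0 k_infty fq_tau)
  (cvg_sum_block_mass k_gt0 A_gt0 B_card fq_tau) D'.
rewrite -[expR _]add0r; apply: cvg_trans (cvgD prod_approx prod_cvg).
by apply: near_eq_cvg; apply: nearW => n; rewrite /= subrK.
Qed.
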